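(* Let $\phi$ be a modal formula and $\Psi$ the set of its subformulas. If $\phi$ is satisfiable in the frame $(\mathbb{R},R_{>1})$ under some valuation, then $\phi$ is satisfiable in $(\mathbb{R},R_{>1})$ under a special valuation (with respect to $\Psi$).
   Context: Modal formulas are built from propositional variables using $\bot$, $\to$ and one unary modality $\lozenge$. In the frame $(\mathbb{R},R_{>1})$, $xR_{>1}y$ iff $|x-y|>1$. A valuation $v$ assigns subsets of $\mathbb{R}$ to variables and extends to $\overline{v}(\varphi)=\{x: x\models_v\varphi\}$, where $x\models_v\lozenge\varphi$ iff some $y$ with $|x-y|>1$ satisfies $\varphi$. A formula is satisfiable under $v$ if $\overline{v}(\phi)\ne\emptyset$. For a valuation $v$, let $B_v$ be the Boolean subalgebra of the powerset of $\mathbb{R}$ generated by $\{\overline{v}(\psi):\psi\in\Psi\}$, and let $X_v$ be the set of all real numbers that arise as infima or suprema of members of $B_v$. The valuation $v$ is called special if $X_v\subseteq\mathbb{Q}$. *)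

From Stdlib Require Import Reals QArith.
Open Scope R_scope.

Inductive form : Type :=
| Var : nat -> form
| Bot : form
| Imp : form -> form -> form
| Dia : form -> form.

Definition valuation := nat -> R -> Prop.

Definition Rgt1 (x y : R) : Prop := Rabs (x - y) > 1.

Fixpoint ext (v : valuation) (phi : form) : R -> Prop :=
  match phi with
  | Var n => v n
  | Bot => fun _ => False
  | Imp a b => fun x => ext v a x -> ext v b x
  | Dia a => fun x => exists y, Rgt1 x y /\ ext v a y
  end.

Definition satisfiable (v : valuation) (phi : form) : Prop :=
  exists x, ext v phi x.

Inductive subform : form -> form -> Prop :=
| sub_refl : forall phi, subform phi phi
| sub_impl : forall a b psi, subform psi a -> subform psi (Imp a b)
| sub_impr : forall a b psi, subform psi b -> subform psi (Imp a b)
| sub_dia  : forall a psi, subform psi a -> subform psi (Dia a).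

(* B_v: the Boolean subalgebra of the powerset of R generated by
   the truth sets of the formulas in Psi. *)
Inductive inB (Psi : form -> Prop) (v : valuation) : (R -> Prop) -> Prop :=
| inB_gen : forall psi, Psi psi -> inB Psi v (ext v psi)
| inB_empty : inB Psi v (fun _ => False)
| inB_compl : forall S, inB Psi v S -> inB Psi v (fun x => ~ S x)
| inB_union : forall S T, inB Psi v S -> inB Psi v T ->
                inB Psi v (fun x => S x \/ T x).

Definition is_lower_bound (S : R -> Prop) (m : R) : Prop :=
  forall x, S x -> m <= x.
Definition is_glb (S : R -> Prop) (m : R) : Prop :=
  is_lower_bound S m /\ (forall b, is_lower_bound S b -> b <= m).

Definition Xv (Psi : form -> Prop) (v : valuation) (x : R) : Prop :=
  exists S, inB Psi v S /\ (is_glb S x \/ is_lub S x).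

Definition special (Psi : form -> Prop) (v : valuation) : Prop :=
  forall x, Xv Psi v x -> exists q : Q, x = Q2R q.

(* Every member of B_v is a union of the finitely many cells cut out by the
   truth sets of the subformulas, so only finitely many reals arise as infima or
   suprema of members of B_v.  An increasing bijection h of R with
   h (x + 1) = h x + 1 is an automorphism of (R, R_{>1}); pulling v back along h
   preserves satisfiability and replaces X_v by h (X_v).  Such an h can send any
   finite set of reals to rationals: treat one irrational point at a time, moving
   its fractional part to a nearby rational by a piecewise affine bump whose
   support avoids 0, 1 and the fractional parts of the points already made
   rational. *)

From Stdlib Require Import Reals QArith Qreals Lra Lia Classical List.
Open Scope R_scope.

Definition rational (x : R) : Prop := exists q : Q, x = Q2R q.

Lemma Q2R_inject_Z z : Q2R (inject_Z z) = IZR z.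
Proof. unfold Q2R, inject_Z; simpl. field. Qed.

Lemma rational_IZR_plus z x : rational x -> rational (IZR z + x).
Proof.
  intros [q ->]. exists (inject_Z z + q)%Q.
  rewrite Q2R_plus, Q2R_inject_Z. reflexivity.
Qed.

Lemma rational_frac_part x : rational x -> rational (frac_part x).
Proof.
  intros Hx. unfold frac_part. replace (x - IZR (Int_part x)) with (IZR (- Int_part x) + x)
    by (rewrite opp_IZR; ring).
  now apply rational_IZR_plus.
Qed.

Lemma rational_of_frac_part x : rational (frac_part x) -> rational x.
Proof. intros Hx. rewrite (Rplus_Int_part_frac_part x). now apply rational_IZR_plus. Qed.

Lemma exists_rational_between a b : a < b -> exists q, a < Q2R q < b.
Proof.
  intros Hab. destruct (archimed_cor1 (b - a)) as [N [HN HN0]]; [lra|].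
  assert (HNpos : 0 < INR N) by (apply lt_0_INR; lia).
  destruct (archimed (a * INR N)) as [Hup1 Hup2].
  exists (inject_Z (up (a * INR N)) / inject_Z (Z.of_nat N))%Q.
  assert (HNz : ~ (inject_Z (Z.of_nat N) == 0)%Q).
  { intros E. apply Qeq_eqR in E. rewrite Q2R_inject_Z, <- INR_IZR_INZ in E.
    unfold Q2R in E; simpl in E. lra. }
  rewrite Q2R_div, !Q2R_inject_Z, <- INR_IZR_INZ by exact HNz.
  set (z := IZR (up (a * INR N))) in *.
  assert (Hz : a < z / INR N <= a + / INR N).
  { split.
    - apply (Rmult_lt_reg_r (INR N)); [exact HNpos|]. field_simplify; lra.
    - apply (Rmult_le_reg_r (INR N)); [exact HNpos|]. field_simplify; lra. }
  lra.
Qed.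

Record order_iso (h g : R -> R) : Prop := {
  iso_incr : forall x y, x < y -> h x < h y;
  iso_inv_l : forall x, g (h x) = x;
  iso_inv_r : forall y, h (g y) = y }.

Arguments iso_incr {h g} _ _ _ _.
Arguments iso_inv_l {h g} _ _.
Arguments iso_inv_r {h g} _ _.

Lemma order_iso_id : order_iso (fun x => x) (fun x => x).
Proof. now split. Qed.

Lemma order_iso_comp h1 g1 h2 g2 : order_iso h1 g1 -> order_iso h2 g2 ->
  order_iso (fun x => h2 (h1 x)) (fun y => g1 (g2 y)).
Proof.
  intros [I1 L1 R1] [I2 L2 R2]. split; intros.
  - auto.
  - now rewrite L2, L1.
  - now rewrite R1, R2.
Qed.

Lemma order_iso_lt h g : order_iso h g -> forall x y, h x < h y <-> x < y.
Proof.
  intros Hh x y. split; [|apply (iso_incr Hh)].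
  intros Hlt. destruct (Rtotal_order x y) as [|[->|Hyx]]; [easy| lra |].
  apply (iso_incr Hh) in Hyx. lra.
Qed.

Lemma order_iso_le h g : order_iso h g -> forall x y, x <= y -> h x <= h y.
Proof. intros Hh x y [Hlt | ->]; [left; now apply (iso_incr Hh) | right; reflexivity]. Qed.

Lemma order_iso_sym h g : order_iso h g -> order_iso g h.
Proof.
  intros Hh. split.
  - intros x y Hxy. apply (order_iso_lt h g Hh). now rewrite !(iso_inv_r Hh).
  - exact (iso_inv_r Hh).
  - exact (iso_inv_l Hh).
Qed.

Record shift_iso (h g : R -> R) : Prop := {
  shift_order_iso : order_iso h g;
  shift_iso_plus1 : forall x, h (x + 1) = h x + 1 }.

Arguments shift_order_iso {h g} _.
Arguments shift_iso_plus1 {h g} _ _.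

Lemma shift_iso_id : shift_iso (fun x => x) (fun x => x).
Proof. split; [exact order_iso_id | reflexivity]. Qed.

Lemma shift_iso_comp h1 g1 h2 g2 : shift_iso h1 g1 -> shift_iso h2 g2 ->
  shift_iso (fun x => h2 (h1 x)) (fun y => g1 (g2 y)).
Proof.
  intros [O1 P1] [O2 P2]. split.
  - now apply order_iso_comp.
  - intros x. now rewrite P1, P2.
Qed.

Lemma shift_iso_Rgt1 h g : shift_iso h g -> forall x y, Rgt1 (h x) (h y) <-> Rgt1 x y.
Proof.
  intros [Ho Hp] x y. unfold Rgt1, Rabs.
  pose proof (order_iso_lt h g Ho (y + 1) x) as Eyx.
  pose proof (order_iso_lt h g Ho (x + 1) y) as Exy.
  rewrite Hp in Eyx, Exy.
  destruct (Rcase_abs (h x - h y)), (Rcase_abs (x - y)); split; intros; lra.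
Qed.

Definition periodize (k : R -> R) (x : R) : R := IZR (Int_part x) + k (frac_part x).

Lemma periodize_IZR_plus k z s : 0 <= s < 1 -> periodize k (IZR z + s) = IZR z + k s.
Proof.
  intros Hs. destruct (Int_part_frac_part_spec (IZR z + s) z s Hs eq_refl) as [Ez Es].
  unfold periodize. now rewrite <- Ez, <- Es.
Qed.

Lemma order_iso_unit_interval k kk : order_iso k kk -> k 0 = 0 -> k 1 = 1 ->
  forall s, 0 <= s < 1 -> 0 <= k s < 1.
Proof.
  intros Hk H0 H1 s [Hs0 Hs1]. rewrite <- H0, <- H1. split.
  - now apply (order_iso_le k kk).
  - now apply (iso_incr Hk).
Qed.

Lemma shift_iso_periodize k kk : order_iso k kk -> k 0 = 0 -> k 1 = 1 ->
  shift_iso (periodize k) (periodize kk).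
Proof.
  intros Hk H0 H1.
  assert (Hkk : order_iso kk k) by now apply order_iso_sym.
  assert (Hkk0 : kk 0 = 0) by (rewrite <- H0 at 1; apply (iso_inv_l Hk)).
  assert (Hkk1 : kk 1 = 1) by (rewrite <- H1 at 1; apply (iso_inv_l Hk)).
  pose proof (order_iso_unit_interval k kk Hk H0 H1) as Rk.
  pose proof (order_iso_unit_interval kk k Hkk Hkk0 Hkk1) as Rkk.
  assert (Split : forall x, exists m s, 0 <= s < 1 /\ x = IZR m + s).
  { intros x. exists (Int_part x), (frac_part x).
    split; [pose proof (base_fp x); lra | apply Rplus_Int_part_frac_part]. }
  split; [split|].
  - intros x y Hxy.
    destruct (Split x) as (m & s & Hs & ->), (Split y) as (n & s' & Hs' & ->).
    rewrite !periodize_IZR_plus by assumption.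
    assert (Hmn : (m <= n)%Z) by (apply Z.lt_succ_r, lt_IZR; rewrite succ_IZR; lra).
    destruct (Z.eq_dec m n) as [<- | Hne].
    + apply Rplus_lt_compat_l, (iso_incr Hk). lra.
    + assert (IZR m + 1 <= IZR n) by (rewrite <- succ_IZR; apply IZR_le; lia).
      pose proof (Rk s Hs). pose proof (Rk s' Hs'). lra.
  - intros x. destruct (Split x) as (m & s & Hs & ->).
    rewrite !periodize_IZR_plus, (iso_inv_l Hk) by auto. reflexivity.
  - intros x. destruct (Split x) as (m & s & Hs & ->).
    rewrite !periodize_IZR_plus, (iso_inv_r Hk) by auto. reflexivity.
  - intros x. destruct (Split x) as (m & s & Hs & ->).
    replace (IZR m + s + 1) with (IZR (m + 1) + s) by (rewrite plus_IZR; ring).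
    rewrite !periodize_IZR_plus, plus_IZR by assumption. ring.
Qed.

Definition interp (x0 x1 y0 y1 s : R) : R := y0 + (s - x0) * ((y1 - y0) / (x1 - x0)).

Section Interp.
Variables x0 x1 y0 y1 : R.
Hypotheses (Hx : x0 < x1) (Hy : y0 < y1).

Lemma interp_lt s s' : s < s' -> interp x0 x1 y0 y1 s < interp x0 x1 y0 y1 s'.
Proof.
  intros Hs. unfold interp. apply Rplus_lt_compat_l, Rmult_lt_compat_r; [|lra].
  apply Rdiv_lt_0_compat; lra.
Qed.

Lemma interp_left : interp x0 x1 y0 y1 x0 = y0.
Proof. unfold interp. ring. Qed.

Lemma interp_right : interp x0 x1 y0 y1 x1 = y1.
Proof. unfold interp. field. lra. Qed.

Lemma interp_inv s : interp y0 y1 x0 x1 (interp x0 x1 y0 y1 s) = s.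
Proof. unfold interp. field. lra. Qed.

End Interp.

Definition bump (a b t q s : R) : R :=
  if Rle_dec s a then s else if Rle_dec b s then s else
  if Rle_dec s t then interp a t a q s else interp t b q b s.

Section Bump.
Variables a b t q : R.
Hypotheses (Ht : a < t < b) (Hq : a < q < b).

Lemma bump_cases s :
  ((s <= a \/ b <= s) /\ bump a b t q s = s) \/
  (a < s <= t /\ a < bump a b t q s <= q /\ bump a b t q s = interp a t a q s) \/
  (t < s < b /\ q < bump a b t q s < b /\ bump a b t q s = interp t b q b s).
Proof.
  unfold bump.
  destruct (Rle_dec s a); [left; auto|].
  destruct (Rle_dec b s); [left; auto|].
  destruct (Rle_dec s t) as [Hst|Hst]; right; [left|right].
  - pose proof (interp_left a t a q). pose proof (interp_right a t a q ltac:(lra)).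
    pose proof (interp_lt a t a q ltac:(lra) ltac:(lra) a s).
    destruct Hst as [Hst | ->]; [pose proof (interp_lt a t a q ltac:(lra) ltac:(lra) s t Hst)|];
      repeat split; lra.
  - pose proof (interp_left t b q b). pose proof (interp_right t b q b ltac:(lra)).
    pose proof (interp_lt t b q b ltac:(lra) ltac:(lra) t s).
    pose proof (interp_lt t b q b ltac:(lra) ltac:(lra) s b).
    repeat split; lra.
Qed.

Lemma bump_fixed s : s <= a \/ b <= s -> bump a b t q s = s.
Proof. intros Hs. unfold bump. destruct (Rle_dec s a), (Rle_dec b s); auto; lra. Qed.

Lemma bump_center : bump a b t q t = q.
Proof.
  unfold bump. destruct (Rle_dec t a), (Rle_dec b t), (Rle_dec t t); try lra.
  apply interp_right. lra.
Qed.

Lemma bump_incr s s' : s < s' -> bump a b t q s < bump a b t q s'.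
Proof.
  intros Hs.
  destruct (bump_cases s) as [(A1 & A2) | [(A1 & A2 & A3) | (A1 & A2 & A3)]];
  destruct (bump_cases s') as [(B1 & B2) | [(B1 & B2 & B3) | (B1 & B2 & B3)]];
  try lra; rewrite A3, B3; apply interp_lt; lra.
Qed.

End Bump.

Lemma bump_inv a b t q s : a < t < b -> a < q < b -> bump a b q t (bump a b t q s) = s.
Proof.
  intros Ht Hq.
  destruct (bump_cases a b t q Ht Hq s) as [(A1 & A2) | [(A1 & A2 & A3) | (A1 & A2 & A3)]];
  [rewrite A2; now apply bump_fixed | |];
  set (u := bump a b t q s) in *; unfold bump;
  destruct (Rle_dec u a), (Rle_dec b u), (Rle_dec u q); try lra;
  rewrite A3; apply interp_inv; lra.
Qed.

Lemma order_iso_bump a b t q : a < t < b -> a < q < b -> order_iso (bump a b t q) (bump a b q t).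
Proof.
  intros Ht Hq. split.
  - intros s s'. now apply bump_incr.
  - intros s. now apply bump_inv.
  - intros y. now apply bump_inv.
Qed.

Lemma exists_sep_finite (l : list R) t : (forall p, In p l -> p <> t) ->
  exists e, 0 < e /\ forall p, In p l -> e < Rabs (p - t).
Proof.
  induction l as [|p l IH]; intros Hl.
  - exists 1. split; [lra | intros p []].
  - destruct IH as [e [He Hsep]]; [intros p' Hp'; apply Hl; now right|].
    assert (Hp : 0 < Rabs (p - t)) by (apply Rabs_pos_lt; apply Rminus_eq_contra, Hl; now left).
    exists (Rmin e (Rabs (p - t) / 2)). split; [apply Rmin_pos; lra|].
    pose proof (Rmin_l e (Rabs (p - t) / 2)). pose proof (Rmin_r e (Rabs (p - t) / 2)).
    intros p' [<- | Hp']; [lra|]. specialize (Hsep p' Hp'). lra.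
Qed.

Lemma shift_iso_rationalize_point (P : list R) r :
  (forall y, In y P -> rational y) -> ~ rational r ->
  exists h g, shift_iso h g /\ (forall y, In y P -> h y = y) /\ rational (h r).
Proof.
  intros HP Hr. set (t := frac_part r).
  assert (Hsep : forall p, In p (0 :: 1 :: map frac_part P) -> p <> t).
  { intros p Hp E. apply Hr, rational_of_frac_part. fold t. rewrite <- E.
    destruct Hp as [<- | [<- | Hp]]; [exists 0%Q | exists 1%Q |];
      [unfold Q2R; simpl; field .. |].
    apply in_map_iff in Hp as [y [<- Hy]]. now apply rational_frac_part, HP. }
  destruct (exists_sep_finite _ t Hsep) as [e [He Hfar]].
  pose proof (Hfar 0 (or_introl eq_refl)) as Hfar0.
  pose proof (Hfar 1 (or_intror (or_introl eq_refl))) as Hfar1.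
  pose proof (base_fp r) as Ht. fold t in Ht.
  rewrite Rabs_minus_sym, Rabs_right in Hfar0 by lra.
  rewrite Rabs_right in Hfar1 by lra.
  set (a := t - e / 2). set (b := t + e / 2).
  assert (Hab : 0 < a < t /\ t < b < 1) by (unfold a, b; lra).
  destruct (exists_rational_between a b) as [q Hq]; [lra|].
  exists (periodize (bump a b t (Q2R q))), (periodize (bump a b (Q2R q) t)).
  split; [|split].
  - apply shift_iso_periodize; [apply order_iso_bump; lra | |];
      apply bump_fixed; simpl; lra.
  - intros y Hy. unfold periodize. rewrite bump_fixed.
    + symmetry. apply Rplus_Int_part_frac_part.
    + pose proof (Hfar (frac_part y) (or_intror (or_intror (in_map _ _ _ Hy)))) as Hy'.
      unfold Rabs in Hy'. destruct (Rcase_abs (frac_part y - t)); unfold a, b; lra.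
  - unfold periodize. fold t. rewrite bump_center by lra.
    apply rational_IZR_plus. now exists q.
Qed.

Lemma shift_iso_rationalize (L : list R) :
  exists h g, shift_iso h g /\ forall x, In x L -> rational (h x).
Proof.
  induction L as [|x L IH].
  - exists (fun x => x), (fun x => x). split; [exact shift_iso_id | intros x []].
  - destruct IH as (h1 & g1 & Hiso1 & HL).
    destruct (classic (rational (h1 x))) as [Hx | Hx].
    + exists h1, g1. split; [exact Hiso1|]. intros y [<- | Hy]; auto.
    + destruct (shift_iso_rationalize_point (map h1 L) (h1 x)) as (h2 & g2 & Hiso2 & Hfix & Hrat).
      * intros y Hy. apply in_map_iff in Hy as [y' [<- Hy']]. auto.
      * exact Hx.
      * exists (fun y => h2 (h1 y)), (fun y => g1 (g2 y)). split; [now apply shift_iso_comp|].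
        intros y [<- | Hy]; [exact Hrat|]. rewrite Hfix by (now apply in_map). auto.
Qed.

Definition is_extremum (S : R -> Prop) (m : R) : Prop := is_glb S m \/ is_lub S m.

Lemma is_glb_opp S m : is_glb S m <-> is_lub (fun x => S (- x)) (- m).
Proof.
  unfold is_glb, is_lower_bound, is_lub, is_upper_bound. split.
  - intros [Hlb Hglb]. split.
    + intros x Hx. specialize (Hlb _ Hx). lra.
    + intros b Hb. enough (- b <= m) by lra. apply Hglb.
      intros x Hx. enough (- x <= b) by lra. apply Hb. now rewrite Ropp_involutive.
  - intros [Hub Hlub]. split.
    + intros x Hx. enough (- x <= - m) by lra. apply Hub. now rewrite Ropp_involutive.
    + intros b Hb. enough (- m <= - b) by lra. apply Hlub.
      intros x Hx. specialize (Hb _ Hx). lra.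
Qed.

Lemma is_lub_ext (A B : R -> Prop) m : (forall x, A x <-> B x) -> is_lub A m -> is_lub B m.
Proof.
  intros E [Hub Hlub]. split.
  - intros x Hx. now apply Hub, E.
  - intros b Hb. apply Hlub. intros x Hx. now apply Hb, E.
Qed.

Lemma is_extremum_ext (A B : R -> Prop) m :
  (forall x, A x <-> B x) -> is_extremum A m -> is_extremum B m.
Proof.
  intros E [Hm | Hm]; [left; rewrite is_glb_opp in * | right];
    revert Hm; apply is_lub_ext; intros x; apply E.
Qed.

(* If neither part had supremum [m], both would have upper bounds below [m]. *)
Lemma is_lub_union (A B : R -> Prop) m :
  is_lub (fun x => A x \/ B x) m -> is_lub A m \/ is_lub B m.
Proof.
  intros [Hub Hlub]. apply NNPP. intros Hn. apply not_or_and in Hn as [HA HB].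
  assert (Below : forall C : R -> Prop, is_upper_bound C m -> ~ is_lub C m ->
            exists b, is_upper_bound C b /\ b < m).
  { intros C HC HnC. apply NNPP. intros Hno. apply HnC. split; [exact HC|].
    intros b Hb. apply Rnot_lt_le. intros Hbm. apply Hno. now exists b. }
  destruct (Below A) as [bA [HbA HbAm]]; [intros x Hx; apply Hub; now left | exact HA |].
  destruct (Below B) as [bB [HbB HbBm]]; [intros x Hx; apply Hub; now right | exact HB |].
  enough (m <= Rmax bA bB) by (pose proof (Rmax_lub_lt bA bB m HbAm HbBm); lra).
  apply Hlub. intros x [Hx | Hx].
  - apply Rle_trans with bA; [now apply HbA | apply Rmax_l].
  - apply Rle_trans with bB; [now apply HbB | apply Rmax_r].
Qed.

Lemma is_extremum_union (A B : R -> Prop) m :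
  is_extremum (fun x => A x \/ B x) m -> is_extremum A m \/ is_extremum B m.
Proof.
  unfold is_extremum. rewrite !is_glb_opp. intros [Hm | Hm].
  - apply (is_lub_union (fun x => A (- x)) (fun x => B (- x))) in Hm. tauto.
  - apply is_lub_union in Hm. tauto.
Qed.

Lemma not_is_lub_empty (S : R -> Prop) m : (forall x, ~ S x) -> ~ is_lub S m.
Proof.
  intros Hempty [_ Hlub]. enough (m <= m - 1) by lra.
  apply Hlub. intros x Hx. exfalso. exact (Hempty x Hx).
Qed.

Lemma not_is_extremum_empty (S : R -> Prop) m : (forall x, ~ S x) -> ~ is_extremum S m.
Proof.
  intros Hempty [Hm | Hm]; [rewrite is_glb_opp in Hm|]; revert Hm; apply not_is_lub_empty;
    intros x; apply Hempty.
Qed.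

Lemma extrema_finite (S : R -> Prop) : exists L, forall m, is_extremum S m -> In m L.
Proof.
  destruct (classic (exists m, is_glb S m)) as [[m1 H1] | N1];
  destruct (classic (exists m, is_lub S m)) as [[m2 H2] | N2];
  [exists (m1 :: m2 :: nil) | exists (m1 :: nil) | exists (m2 :: nil) | exists nil];
  intros m [Hm | Hm]; try (exfalso; eauto; fail).
  - left. rewrite is_glb_opp in H1, Hm. pose proof (is_lub_u _ _ _ H1 Hm). lra.
  - right; left. exact (is_lub_u _ _ _ H2 Hm).
  - left. rewrite is_glb_opp in H1, Hm. pose proof (is_lub_u _ _ _ H1 Hm). lra.
  - left. exact (is_lub_u _ _ _ H2 Hm).
Qed.

Definition same_cell (l : list (R -> Prop)) (x y : R) : Prop := Forall (fun P => P x <-> P y) l.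

(* Induction on [l]: splitting [D] along the first set of [l] splits [S] into two
   pieces, one of which carries the extremum of [S]. *)
Lemma extrema_of_cell_unions_in (l : list (R -> Prop)) : forall D : R -> Prop, exists L,
  forall S m, (forall x, S x -> D x) ->
  (forall x y, D x -> D y -> same_cell l x y -> (S x <-> S y)) ->
  is_extremum S m -> In m L.
Proof.
  induction l as [|P l IH]; intros D.
  - destruct (extrema_finite D) as [L HL]. exists L. intros S m HSD Hcell Hm.
    destruct (classic (exists x0, S x0)) as [[x0 Hx0] | Hempty].
    + apply HL. revert Hm. apply is_extremum_ext. intros x. split; [apply HSD|].
      intros Dx. apply (Hcell x0 x); auto. constructor.
    + exfalso. revert Hm. apply not_is_extremum_empty. intros x Hx. eauto.
  - destruct (IH (fun x => D x /\ P x)) as [L1 H1].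
    destruct (IH (fun x => D x /\ ~ P x)) as [L2 H2].
    exists (L1 ++ L2). intros S m HSD Hcell Hm. apply in_or_app.
    assert (Hsplit : is_extremum (fun x => S x /\ P x) m \/ is_extremum (fun x => S x /\ ~ P x) m).
    { apply is_extremum_union. revert Hm. apply is_extremum_ext.
      intros x. destruct (classic (P x)); tauto. }
    assert (Hcell' : forall x y, D x -> D y -> (P x <-> P y) -> same_cell l x y -> (S x <-> S y)).
    { intros x y Dx Dy Pxy Hxy. apply Hcell; auto. now constructor. }
    destruct Hsplit as [Hm' | Hm'].
    + left. apply (H1 (fun x => S x /\ P x) m); [firstorder | | exact Hm'].
      intros x y [Dx Px] [Dy Py] Hxy. pose proof (Hcell' x y Dx Dy ltac:(tauto) Hxy). tauto.
    + right. apply (H2 (fun x => S x /\ ~ P x) m); [firstorder | | exact Hm'].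
      intros x y [Dx Px] [Dy Py] Hxy. pose proof (Hcell' x y Dx Dy ltac:(tauto) Hxy). tauto.
Qed.

Lemma extrema_of_cell_unions (l : list (R -> Prop)) : exists L,
  forall S m, (forall x y, same_cell l x y -> (S x <-> S y)) -> is_extremum S m -> In m L.
Proof.
  destruct (extrema_of_cell_unions_in l (fun _ => True)) as [L HL].
  exists L. intros S m Hcell. apply HL; auto.
Qed.

Definition pullback (g : R -> R) (v : valuation) : valuation := fun n z => v n (g z).

Lemma ext_pullback h g v : shift_iso h g ->
  forall psi y, ext (pullback g v) psi y <-> ext v psi (g y).
Proof.
  intros Hiso. pose proof (shift_order_iso Hiso) as Ho.
  induction psi as [n | | a IHa b IHb | a IHa]; intros y; simpl; try tauto.
  - rewrite IHa, IHb. tauto.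
  - split.
    + intros [z [Hyz Hz]]. exists (g z). split; [|now apply IHa].
      apply (shift_iso_Rgt1 h g Hiso). now rewrite !(iso_inv_r Ho).
    + intros [w [Hyw Hw]]. exists (h w). split.
      * rewrite <- (shift_iso_Rgt1 h g Hiso), (iso_inv_r Ho) in Hyw. exact Hyw.
      * apply IHa. now rewrite (iso_inv_l Ho).
Qed.

Lemma inB_pullback h g v Psi S : shift_iso h g -> inB Psi (pullback g v) S ->
  exists T, inB Psi v T /\ forall y, S y <-> T (g y).
Proof.
  intros Hiso HS. induction HS as [psi Hpsi | | S HS (T & HT & E) | S1 S2 HS1 (T1 & HT1 & E1) HS2 (T2 & HT2 & E2)].
  - exists (ext v psi). split; [now constructor | now apply (ext_pullback h)].
  - exists (fun _ => False). split; [constructor | tauto].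
  - exists (fun x => ~ T x). split; [now constructor|]. intros y. now rewrite E.
  - exists (fun x => T1 x \/ T2 x). split; [now constructor|]. intros y. now rewrite E1, E2.
Qed.

Lemma is_lub_order_iso h g T m : order_iso h g -> is_lub (fun y => T (g y)) m -> is_lub T (g m).
Proof.
  intros Ho [Hub Hlub]. pose proof (order_iso_sym h g Ho) as Ho'. split.
  - intros w Hw. rewrite <- (iso_inv_l Ho w). apply (order_iso_le g h Ho'), Hub.
    now rewrite (iso_inv_l Ho).
  - intros b Hb. rewrite <- (iso_inv_l Ho b). apply (order_iso_le g h Ho'), Hlub.
    intros y Hy. rewrite <- (iso_inv_r Ho y). now apply (order_iso_le h g Ho), Hb.
Qed.

Lemma is_glb_order_iso h g T m : order_iso h g -> is_glb (fun y => T (g y)) m -> is_glb T (g m).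
Proof.
  intros Ho [Hlb Hglb]. pose proof (order_iso_sym h g Ho) as Ho'. split.
  - intros w Hw. rewrite <- (iso_inv_l Ho w). apply (order_iso_le g h Ho'), Hlb.
    now rewrite (iso_inv_l Ho).
  - intros b Hb. rewrite <- (iso_inv_l Ho b). apply (order_iso_le g h Ho'), Hglb.
    intros y Hy. rewrite <- (iso_inv_r Ho y). now apply (order_iso_le h g Ho), Hb.
Qed.

Lemma is_extremum_order_iso h g T m : order_iso h g ->
  is_extremum (fun y => T (g y)) m -> is_extremum T (g m).
Proof.
  intros Ho [Hm | Hm]; [left; now apply (is_glb_order_iso h) | right; now apply (is_lub_order_iso h)].
Qed.

Fixpoint subforms (phi : form) : list form :=
  phi :: match phi with
         | Imp a b => subforms a ++ subforms b
         | Dia a => subforms a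
         | _ => nil
         end.

Lemma subform_in_subforms psi phi : subform psi phi -> In psi (subforms phi).
Proof.
  induction 1 as [phi | a b psi _ IH | a b psi _ IH | a psi _ IH]; simpl.
  - destruct phi; now left.
  - right. apply in_or_app. now left.
  - right. apply in_or_app. now right.
  - now right.
Qed.

Lemma inB_same_cell Psi v l S : (forall psi, Psi psi -> In (ext v psi) l) -> inB Psi v S ->
  forall x y, same_cell l x y -> (S x <-> S y).
Proof.
  intros Hgen HS x y Hxy. unfold same_cell in Hxy. rewrite Forall_forall in Hxy.
  induction HS as [psi Hpsi | | S _ IH | S1 S2 _ IH1 _ IH2].
  - now apply Hxy, Hgen.
  - tauto.
  - now rewrite IH.
  - now rewrite IH1, IH2.
Qed.

Theorem lemma4p4 (phi : form) :
  (exists v : valuation, satisfiable v phi) ->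
  exists v : valuation, special (fun psi => subform psi phi) v /\ satisfiable v phi.
Proof.
  intros [v [x0 Hx0]].
  destruct (extrema_of_cell_unions (map (ext v) (subforms phi))) as [L HL].
  destruct (shift_iso_rationalize L) as (h & g & Hiso & Hrat).
  pose proof (shift_order_iso Hiso) as Ho.
  exists (pullback g v). split.
  - intros x [S [HS Hx]].
    destruct (inB_pullback h g v _ S Hiso HS) as (T & HT & EST).
    rewrite <- (iso_inv_r Ho x). apply Hrat, (HL T).
    + apply (inB_same_cell (fun psi => subform psi phi) v); [|exact HT].
      intros psi Hpsi. now apply in_map, subform_in_subforms.
    + apply (is_extremum_order_iso h g T x Ho).
      revert Hx. apply is_extremum_ext. intros y. apply EST.
  - exists (h x0). apply (ext_pullback h g v Hiso). now rewrite (iso_inv_l Ho).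
Qed.
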